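(* The separable closure $\mathbb F^{sep}$ of $\mathbb F$ is contained in $\mathcal U(\mathbb F)^{sep}_{ultra}=\prod_{s}\mathfrak F_s^{sep}/\mathcal D$. Equivalently, every $\alpha\in\mathbb F^{sep}$ can be written $\alpha=\mathrm{ulim}_s\alpha_s$ with $\alpha_s\in\mathfrak F_s^{sep}$ for $\mathcal D$-almost all $s$.
   Context: Let $S$ be an infinite set, $\mathcal D$ a nonprincipal ultrafilter on $S$; ultraproducts $\prod_sA_s/\mathcal D$ consist of tuples modulo agreement on a set in $\mathcal D$, with classes written $\mathrm{ulim}_sa_s$ and componentwise operations; ''for $\mathcal D$-almost all $s$'' means on a set belonging to $\mathcal D$. For each $s$ let $\mathbb F_s$ be a field, $\mathfrak F_s=\mathbb F_s(t)$; $\mathfrak K=\prod_s\mathbb F_s/\mathcal D$, $\mathbb F=\mathfrak K(t)$, viewed as a subfield of $\mathcal U(\mathbb F)=\prod_s\mathfrak F_s/\mathcal D$ via $\sum_i(\mathrm{ulim}_sa_{i,s})t^i\mapsto\mathrm{ulim}_s\sum_ia_{i,s}t^i$ (and quotients). For each $s$ fix an algebraic closure $\mathfrak F_s^{alg}$ and the separable closure $\mathfrak F_s^{sep}\subseteq\mathfrak F_s^{alg}$. Then $\mathcal U(\mathbb F)^{alg}_{ultra}=\prod_s\mathfrak F_s^{alg}/\mathcal D$ is an algebraically closed field containing $\mathcal U(\mathbb F)$; $\mathbb F^{alg}$ denotes the set of elements of $\mathcal U(\mathbb F)^{alg}_{ultra}$ algebraic over $\mathbb F$ (an algebraic closure of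 $\mathbb F$), and $\mathbb F^{sep}$ the separable closure of $\mathbb F$ inside $\mathbb F^{alg}$. *)

From HB Require Import structures.
From mathcomp Require Import all_boot all_algebra.
From mathcomp Require Import all_field generic_quotient.
From mathcomp Require Import boolp classical_sets cardinality.
Set Implicit Arguments. Unset Strict Implicit. Unset Printing Implicit Defensive.
Import GRing.Theory.
Local Open Scope ring_scope.
Local Open Scope classical_set_scope.
Local Open Scope quotient_scope.

Record ultrafilter (S : Type) (D : set (set S)) : Prop := Ultrafilter {
  uf_setT : D setT;
  uf_set0 : ~ D set0;
  uf_setI : forall X Y, D X -> D Y -> D (X `&` Y);
  uf_sub : forall X Y, X `<=` Y -> D X -> D Y;
  uf_ultra : forall X, D X \/ D (~` X) }.

Section Ultraproduct.
Variables (S : Type) (D : set (set S)) (hD : ultrafilter D) (A : S -> fieldType).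

Definition uprod_carrier := forall s, (A s : choiceType).
Implicit Types x y z : uprod_carrier.

Definition ueq x y : bool := `[< D [set s | x s = y s] >].

Lemma D_mono2 (X Y Z : set S) : D X -> D Y -> (forall s, X s -> Y s -> Z s) -> D Z.
Proof. by move=> hX hY h; apply: (uf_sub hD _ (uf_setI hD hX hY)) => s [] /h. Qed.
Lemma D_mono3 (X Y W Z : set S) : D X -> D Y -> D W ->
  (forall s, X s -> Y s -> W s -> Z s) -> D Z.
Proof.
move=> hX hY hW h; apply: (uf_sub hD _ (uf_setI hD (uf_setI hD hX hY) hW)).
by move=> s [[]] /h H /H.
Qed.
Lemma D_mono1 (X Z : set S) : D X -> (forall s, X s -> Z s) -> D Z.
Proof. by move=> hX h; apply: (uf_sub hD _ hX). Qed.

Lemma ueq_refl : reflexive ueq.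
Proof. by move=> x; apply/asboolP; apply: D_mono1 (uf_setT hD) _. Qed.
Lemma ueq_sym : symmetric ueq.
Proof.
by move=> x y; apply/asboolP/asboolP => h; apply: D_mono1 h _.
Qed.
Lemma ueq_trans : transitive ueq.
Proof.
move=> y x z /asboolP h1 /asboolP h2; apply/asboolP.
by apply: D_mono2 h1 h2 _ => s /= -> .
Qed.

Canonical ueq_equiv := EquivRel ueq ueq_refl ueq_sym ueq_trans.

Definition ultraprod := {eq_quot ueq}.
HB.instance Definition _ : EqQuotient _ ueq ultraprod := EqQuotient.on ultraprod.
HB.instance Definition _ := Choice.on ultraprod.

Definition ulim (x : uprod_carrier) : ultraprod := \pi_ultraprod x.

Lemma ulim_eq x y : D [set s | x s = y s] -> ulim x = ulim y.
Proof. by move=> h; apply/eqmodP; apply/asboolP. Qed.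
Lemma ulim_eqP x y : ulim x = ulim y -> D [set s | x s = y s].
Proof. by move/eqmodP/asboolP. Qed.
Lemma reprD x : D [set s | repr (ulim x) s = x s].
Proof. by apply: ulim_eqP; rewrite /ulim reprK. Qed.
Lemma ulimK (a : ultraprod) : ulim (repr a) = a.
Proof. exact: reprK. Qed.

Definition uzero : ultraprod := ulim (fun s => 0).
Definition uone : ultraprod := ulim (fun s => 1).
Definition uadd (a b : ultraprod) := ulim (fun s => repr a s + repr b s).
Definition uopp (a : ultraprod) := ulim (fun s => - repr a s).
Definition umul (a b : ultraprod) := ulim (fun s => repr a s * repr b s).
Definition uinv (a : ultraprod) := ulim (fun s => (repr a s)^-1).

Ltac uq := repeat (let a := fresh "a" in elim/quotW=> a); rewrite /uadd /uopp /umul /uinv /uzero /uone.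

Lemma uaddA : associative uadd.
Proof.
move=> a b c; apply: ulim_eq; apply: D_mono2 (reprD (fun s => repr a s + repr b s)) (reprD (fun s => repr b s + repr c s)) _.
by move=> s /= -> ->; rewrite addrA.
Qed.
Lemma uaddC : commutative uadd.
Proof. by move=> a b; apply: ulim_eq; apply: D_mono1 (uf_setT hD) _ => s _ /=; rewrite addrC. Qed.
Lemma uadd0 : left_id uzero uadd.
Proof.
move=> a; rewrite -[RHS]ulimK; apply: ulim_eq; apply: D_mono1 (reprD (fun s => 0)) _.
by move=> s /= ->; rewrite add0r.
Qed.
Lemma uaddN : left_inverse uzero uopp uadd.
Proof.
move=> a; apply: ulim_eq; apply: D_mono1 (reprD (fun s => - repr a s)) _.
by move=> s /= ->; rewrite addNr.
Qed.
HB.instance Definition _ := GRing.isZmodule.Build ultraprod uaddA uaddC uadd0 uaddN.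

Lemma umulA : associative umul.
Proof.
move=> a b c; apply: ulim_eq; apply: D_mono2 (reprD (fun s => repr a s * repr b s)) (reprD (fun s => repr b s * repr c s)) _.
by move=> s /= -> ->; rewrite mulrA.
Qed.
Lemma umulC : commutative umul.
Proof. by move=> a b; apply: ulim_eq; apply: D_mono1 (uf_setT hD) _ => s _ /=; rewrite mulrC. Qed.
Lemma umul1 : left_id uone umul.
Proof.
move=> a; rewrite -[RHS]ulimK; apply: ulim_eq; apply: D_mono1 (reprD (fun s => 1)) _.
by move=> s /= ->; rewrite mul1r.
Qed.
Lemma umulD : left_distributive umul uadd.
Proof.
move=> a b c; apply: ulim_eq.
apply: D_mono3 (reprD (fun s => repr a s + repr b s)) (reprD (fun s => repr a s * repr c s)) (reprD (fun s => repr b s * repr c s)) _.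
by move=> s /= -> -> ->; rewrite mulrDl.
Qed.
Lemma uone_neq0 : uone != uzero.
Proof.
apply/eqP=> /ulim_eqP h; apply: (uf_set0 hD); apply: D_mono1 h _ => s /= /eqP.
by rewrite oner_eq0.
Qed.
HB.instance Definition _ :=
  GRing.Zmodule_isComNzRing.Build ultraprod umulA umulC umul1 umulD uone_neq0.

Lemma umulV : forall a : ultraprod, a != 0 -> umul (uinv a) a = 1.
Proof.
move=> a a0; apply: ulim_eq.
have : D [set s | repr a s != 0].
  case: (uf_ultra hD [set s | repr a s != 0]) => // h.
  case/eqP: a0; rewrite -[a]ulimK; apply: ulim_eq; apply: D_mono1 h _.
  by move=> s /= /negP; rewrite negbK => /eqP.
move=> h; apply: D_mono2 h (reprD (fun s => (repr a s)^-1)) _ => s /= nz ->.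
by rewrite mulVf.
Qed.
Lemma uinv0 : uinv 0 = 0.
Proof.
apply: ulim_eq; apply: D_mono1 (reprD (fun s => 0 : A s)) _ => s /= ->.
by rewrite invr0.
Qed.
HB.instance Definition _ := GRing.ComNzRing_isField.Build ultraprod umulV uinv0.

End Ultraproduct.

Definition nonprincipal (S : Type) (D : set (set S)) : Prop :=
  forall s0 : S, ~ D [set s0].

Definition algebraic_over (K L : fieldType) (f : K -> L) (z : L) : Prop :=
  exists p : {poly K}, p != 0 /\ root (map_poly f p) z.
Definition separable_over (K L : fieldType) (f : K -> L) (z : L) : Prop :=
  exists p : {poly K}, [/\ p != 0, separable_poly p & root (map_poly f p) z].

Section Setting.
Variables (S : Type) (D : set (set S)) (hD : ultrafilter D) (F : S -> fieldType).

Definition frakF (s : S) : fieldType := {fraction {poly F s}}.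
Definition frakK : fieldType := ultraprod hD F.
Definition bbF : fieldType := {fraction {poly frakK}}.
Definition UbbF : fieldType := ultraprod hD frakF.

(* sum_i (ulim_s a_{i,s}) t^i |-> ulim_s sum_i a_{i,s} t^i *)
Definition embed_poly (p : {poly frakK}) : UbbF :=
  ulim hD (fun s => tofrac (map_poly (fun a : frakK => repr a s) p)).
Definition embedF (x : bbF) : UbbF :=
  embed_poly \n_(repr x) / embed_poly \d_(repr x).

(* U(bbF)^alg_ultra = prod_s frak F_s^alg / D, with fixed algebraic closures *)
Variables (C : S -> closedFieldType) (iota : forall s, {rmorphism frakF s -> C s}).
Definition UalgC : fieldType := ultraprod hD (fun s => (C s : fieldType)).
Definition embedU (u : UbbF) : UalgC := ulim hD (fun s => iota s (repr u s)).
Definition embedFU (x : bbF) : UalgC := embedU (embedF x).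
End Setting.

Definition ulimC (S : Type) (D : set (set S)) (hD : ultrafilter D)
  (C : S -> closedFieldType) (a : forall s, C s) : UalgC hD C :=
  @ulim S D hD (fun s => (C s : fieldType)) a.

From HB Require Import structures.
From mathcomp Require Import all_boot all_algebra all_field generic_quotient.
From mathcomp Require Import boolp classical_sets cardinality.
Set Implicit Arguments. Unset Strict Implicit. Unset Printing Implicit Defensive.
Import GRing.Theory.
Local Open Scope ring_scope.
Local Open Scope classical_set_scope.

(* If [alpha] is a root of a separable [p] over [bbF], then [u p + v p' = 1]
   for some [u], [v].  Mapped into the ultraproduct, [p] is the ultralimit of
   polynomials [p_s] over [frakF s] of bounded degree, and the Bezout identity
   and the equation [p(alpha) = 0] hold componentwise for D-almost all [s]:
   so [p_s] is separable with root [alpha_s] almost everywhere. *)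

Lemma separable_Bezout1P (K : fieldType) (p : {poly K}) :
  reflect (exists u v, u * p + v * p^`() = 1) (separable_poly p).
Proof.
rewrite unlock; apply: (iffP (Bezout_coprimepP _ _)) => [[[u v] /=]|[u [v uv1]]].
  rewrite -size_poly_eq1 => /size_poly1P [c c_neq0 uv_c].
  exists (c^-1%:P * u), (c^-1%:P * v).
  by rewrite -!mulrA -mulrDr uv_c -polyCM mulVf.
by exists (u, v); rewrite /= uv1 eqpxx.
Qed.

Section Ultralimits.
Variables (S : Type) (D : set (set S)) (hD : ultrafilter D) (A : S -> fieldType).
Local Notation ul := (@ulim S D hD A).
Implicit Types x y : uprod_carrier A.

Lemma ulim_ext x y : (forall s, x s = y s) -> ul x = ul y.
Proof. by move=> e; apply: ulim_eq; apply: (D_mono1 hD (uf_setT hD)) => s _. Qed.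

Lemma ulim0 : ul (fun s => 0) = 0. Proof. by []. Qed.
Lemma ulim1 : ul (fun s => 1) = 1. Proof. by []. Qed.

Lemma ulimD x y : ul x + ul y = ul (fun s => x s + y s).
Proof.
by apply: ulim_eq; apply: (D_mono2 hD (reprD hD x) (reprD hD y)) => s /= -> ->.
Qed.

Lemma ulimM x y : ul x * ul y = ul (fun s => x s * y s).
Proof.
by apply: ulim_eq; apply: (D_mono2 hD (reprD hD x) (reprD hD y)) => s /= -> ->.
Qed.

Lemma ulimMn x n : ul x *+ n = ul (fun s => x s *+ n).
Proof.
elim: n => [|n IH]; first by rewrite mulr0n -ulim0; apply: ulim_ext => s; rewrite mulr0n.
by rewrite mulrS IH ulimD; apply: ulim_ext => s; rewrite mulrS.
Qed.

Lemma ulimX x n : ul x ^+ n = ul (fun s => x s ^+ n).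
Proof.
elim: n => [|n IH]; first by rewrite expr0 -ulim1; apply: ulim_ext => s; rewrite expr0.
by rewrite exprS IH ulimM; apply: ulim_ext => s; rewrite exprS.
Qed.

Lemma ulim_sum (I : Type) (r : seq I) (P : pred I) (f : I -> uprod_carrier A) :
  \sum_(i <- r | P i) ul (f i) = ul (fun s => \sum_(i <- r | P i) f i s).
Proof.
elim: r => [|i r IH].
  by rewrite big_nil -ulim0; apply: ulim_ext => s; rewrite big_nil.
rewrite big_cons IH; case: ifP => Pi; last by apply: ulim_ext => s; rewrite big_cons Pi.
by rewrite ulimD; apply: ulim_ext => s; rewrite big_cons Pi.
Qed.

Lemma D_bigI n (P : nat -> set S) :
  (forall i, (i < n)%N -> D (P i)) -> D [set s | forall i, (i < n)%N -> P i s].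
Proof.
elim: n => [|n IH] DP; first by apply: (D_mono1 hD (uf_setT hD)).
apply: (D_mono2 hD (IH (fun i lt_in => DP i (ltnW lt_in))) (DP n (ltnSn n))).
by move=> s Ps Pns i; rewrite ltnS leq_eqVlt => /predU1P [-> | /Ps].
Qed.

End Ultralimits.

Section UltralimitPolynomials.
Variables (S : Type) (D : set (set S)) (hD : ultrafilter D) (A : S -> fieldType).
Local Notation U := (ultraprod hD A).
Local Notation ul := (@ulim S D hD A).
Implicit Types (q : {poly U}) (r : forall s, {poly A s}).

(* The uniform degree bound turns agreement of each coefficient on some D-large
   set into agreement of the whole polynomials on a single D-large set. *)
Definition is_ulim_poly q r : Prop :=
  (exists n, D [set s | (size (r s) <= n)%N]) /\
  forall i, q`_i = ul (fun s => (r s)`_i).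

Definition ucomponents q s : {poly A s} := map_poly (fun a : U => repr a s) q.

Lemma is_ulim_poly_components q : is_ulim_poly q (ucomponents q).
Proof.
split.
  by exists (size q); apply: (D_mono1 hD (uf_setT hD)) => s _; exact: size_poly.
move=> i; case: (ltnP i (size q)) => [lt_i_q | le_q_i].
  by rewrite -[q`_i]ulimK; apply: ulim_ext => s; rewrite coef_poly lt_i_q.
by rewrite nth_default // -ulim0; apply: ulim_ext => s; rewrite coef_poly ltnNge le_q_i.
Qed.

Lemma is_ulim_poly_uniq q r r' :
  is_ulim_poly q r -> is_ulim_poly q r' -> D [set s | r s = r' s].
Proof.
move=> [[n r_n] qr] [[n' r'_n'] qr'].
have r_r' : D [set s | forall i, (i < maxn n n')%N -> (r s)`_i = (r' s)`_i].
  by apply: (D_bigI hD) => i _; apply: ulim_eqP; rewrite -qr -qr'.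
apply: (D_mono3 hD r_n r'_n' r_r') => s /= size_r size_r' coef_r; apply/polyP => i.
case: (ltnP i (maxn n n')) => [|le_max_i]; first exact: coef_r.
rewrite !nth_default //.
  exact: leq_trans size_r' (leq_trans (leq_maxr n n') le_max_i).
exact: leq_trans size_r (leq_trans (leq_maxl n n') le_max_i).
Qed.

Lemma is_ulim_poly1 : is_ulim_poly 1 (fun s => 1).
Proof.
split.
  by exists 1%N; apply: (D_mono1 hD (uf_setT hD)) => s _ /=; rewrite size_poly1.
by move=> i; rewrite coef1 -ulim1 ulimMn; apply: ulim_ext => s; rewrite coef1.
Qed.

Lemma is_ulim_polyD q q' r r' : is_ulim_poly q r -> is_ulim_poly q' r' ->
  is_ulim_poly (q + q') (fun s => r s + r' s).
Proof.
move=> [[n r_n] qr] [[n' r'_n'] qr']; split.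
  exists (maxn n n'); apply: (D_mono2 hD r_n r'_n') => s /= size_r size_r'.
  rewrite (leq_trans (size_polyD _ _)) // geq_max.
  by rewrite (leq_trans size_r (leq_maxl _ _)) (leq_trans size_r' (leq_maxr _ _)).
by move=> i; rewrite coefD qr qr' ulimD; apply: ulim_ext => s; rewrite coefD.
Qed.

Lemma is_ulim_polyM q q' r r' : is_ulim_poly q r -> is_ulim_poly q' r' ->
  is_ulim_poly (q * q') (fun s => r s * r' s).
Proof.
move=> [[n r_n] qr] [[n' r'_n'] qr']; split.
  exists (n + n')%N; apply: (D_mono2 hD r_n r'_n') => s /= size_r size_r'.
  by rewrite (leq_trans (size_polyMleq _ _)) // (leq_trans (leq_pred _)) ?leq_add.
move=> i; rewrite coefM; under eq_bigr => j _ do rewrite qr qr' ulimM.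
by rewrite ulim_sum; apply: ulim_ext => s; rewrite coefM.
Qed.

Lemma is_ulim_poly_deriv q r :
  is_ulim_poly q r -> is_ulim_poly q^`() (fun s => (r s)^`()).
Proof.
move=> [[n r_n] qr]; split.
  exists n; apply: (D_mono1 hD r_n) => s /= size_r; apply: leq_trans _ size_r.
  have [->|r_neq0] := eqVneq (r s) 0; first by rewrite deriv0.
  exact: ltnW (lt_size_deriv r_neq0).
by move=> i; rewrite coef_deriv qr ulimMn; apply: ulim_ext => s; rewrite coef_deriv.
Qed.

Lemma is_ulim_poly_eq0 q r : is_ulim_poly q r -> D [set s | r s = 0] -> q = 0.
Proof.
move=> [_ qr] r0; apply/polyP => i; rewrite coef0 qr -ulim0; apply: ulim_eq.
by apply: (D_mono1 hD r0) => s /= ->; rewrite coef0.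
Qed.

Lemma is_ulim_poly_horner q r (a : uprod_carrier A) :
  is_ulim_poly q r -> q.[ul a] = ul (fun s => (r s).[a s]).
Proof.
move=> [[n r_n] qr].
have size_q : (size q <= n)%N.
  apply/leq_sizeP => j le_n_j; rewrite qr -ulim0; apply: ulim_eq.
  by apply: (D_mono1 hD r_n) => s /= size_r; rewrite nth_default // (leq_trans size_r).
rewrite (horner_coef_wide _ size_q); under eq_bigr => i _ do rewrite qr ulimX ulimM.
rewrite ulim_sum; apply: ulim_eq; apply: (D_mono1 hD r_n) => s /= size_r.
by rewrite (horner_coef_wide _ size_r).
Qed.

Lemma is_ulim_poly_root q r (a : uprod_carrier A) :
  is_ulim_poly q r -> root q (ul a) -> D [set s | root (r s) (a s)].
Proof.
move=> qr /eqP; rewrite (is_ulim_poly_horner _ qr) -ulim0 => /ulim_eqP qr_a.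
by apply: (D_mono1 hD qr_a) => s /= r_a; apply/eqP.
Qed.

Lemma is_ulim_poly_separable q r :
  is_ulim_poly q r -> separable_poly q -> D [set s | separable_poly (r s)].
Proof.
move=> qr /separable_Bezout1P [u [v uv1]].
have := is_ulim_polyD (is_ulim_polyM (is_ulim_poly_components u) qr)
  (is_ulim_polyM (is_ulim_poly_components v) (is_ulim_poly_deriv qr)).
rewrite uv1 => /(is_ulim_poly_uniq is_ulim_poly1) r_uv1.
apply: (D_mono1 hD r_uv1) => s /= uv1s.
by apply/separable_Bezout1P; exists (ucomponents u s), (ucomponents v s).
Qed.

Lemma ucomponentsD q q' :
  D [set s | ucomponents (q + q') s = ucomponents q s + ucomponents q' s].
Proof.
exact: is_ulim_poly_uniq (is_ulim_poly_components _)
  (is_ulim_polyD (is_ulim_poly_components _) (is_ulim_poly_components _)).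
Qed.

Lemma ucomponentsM q q' :
  D [set s | ucomponents (q * q') s = ucomponents q s * ucomponents q' s].
Proof.
exact: is_ulim_poly_uniq (is_ulim_poly_components _)
  (is_ulim_polyM (is_ulim_poly_components _) (is_ulim_poly_components _)).
Qed.

Lemma ucomponents1 : D [set s | ucomponents 1 s = 1].
Proof. exact: is_ulim_poly_uniq (is_ulim_poly_components _) is_ulim_poly1. Qed.

End UltralimitPolynomials.

Section ComponentwiseMaps.
Variables (S : Type) (D : set (set S)) (hD : ultrafilter D) (A B : S -> fieldType).
Variable f : forall s, {rmorphism A s -> B s}.

Definition umap (u : ultraprod hD A) : ultraprod hD B :=
  ulim hD (fun s => f s (repr u s)).

Lemma umap_ulim x : umap (ulim hD x) = ulim hD (fun s => f s (x s)).
Proof. by apply: ulim_eq; apply: (D_mono1 hD (reprD hD x)) => s /= ->. Qed.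

Lemma umap0 : umap 0 = 0.
Proof. by rewrite -(ulim0 hD) umap_ulim -ulim0; apply: ulim_ext => s; rewrite rmorph0. Qed.

Lemma is_ulim_poly_map q r : is_ulim_poly q r ->
  is_ulim_poly (map_poly umap q) (fun s => map_poly (f s) (r s)).
Proof.
move=> [[n r_n] qr]; split.
  by exists n; apply: (D_mono1 hD r_n) => s /=; rewrite size_map_poly.
move=> i; rewrite coef_map_id0 ?umap0 // qr umap_ulim.
by apply: ulim_ext => s; rewrite coef_map.
Qed.

End ComponentwiseMaps.

Section FractionLift.
Variables (R : idomainType) (L : fieldType) (f : {rmorphism R -> L}).
Hypothesis f_inj : injective f.

Lemma tofrac_numden (x : {fraction R}) :
  x = tofrac \n_(repr x) / tofrac \d_(repr x).
Proof.
have d_neq0 : tofrac \d_(repr x) != 0 :> {fraction R}.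
  by rewrite tofrac_eq0 denom_ratioP.
apply: (mulIf d_neq0); rewrite divfK //; move: (repr x) (reprK x) => r <-.
unlock tofrac; rewrite -[_ * _]FracField.pi_mul; apply/eqmodP.
rewrite /= FracField.equivfE /FracField.mulf.
by rewrite !numden_Ratio ?oner_eq0 ?mulf_neq0 ?oner_eq0 ?denom_ratioP // !mulr1 mulrC.
Qed.

Lemma tofrac_div_exists (x : {fraction R}) :
  exists n d, d != 0 /\ x = tofrac n / tofrac d.
Proof.
by exists \n_(repr x), \d_(repr x); split; [exact: denom_ratioP | exact: tofrac_numden].
Qed.

Definition frac_lift (x : {fraction R}) : L := f \n_(repr x) / f \d_(repr x).

Lemma frac_lift_frac n d : d != 0 -> frac_lift (tofrac n / tofrac d) = f n / f d.
Proof.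
move=> d_neq0; rewrite /frac_lift; set x := tofrac n / tofrac d.
have : tofrac n / tofrac d = tofrac \n_(repr x) / tofrac \d_(repr x) :> {fraction R}.
  exact: tofrac_numden.
move/eqP; rewrite eqr_div ?tofrac_eq0 ?denom_ratioP // -!rmorphM tofrac_eq => /eqP nd.
by apply/eqP; rewrite eqr_div ?(raddf_eq0 _ f_inj) ?denom_ratioP // -!rmorphM nd.
Qed.

Lemma frac_lift_is_zmod_morphism : zmod_morphism frac_lift.
Proof.
move=> x y; have [n [d [d_neq0 ->]]] := tofrac_div_exists x.
have [n' [d' [d'_neq0 ->]]] := tofrac_div_exists y.
have fd_neq0 e : e != 0 -> f e != 0 by rewrite (raddf_eq0 _ f_inj).
rewrite -mulNr -rmorphN addf_div ?tofrac_eq0 // -!rmorphM -rmorphD.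
rewrite !frac_lift_frac ?mulf_neq0 // -mulNr -rmorphN addf_div ?fd_neq0 //.
by rewrite rmorphD !rmorphM.
Qed.

Lemma frac_lift_is_monoid_morphism : monoid_morphism frac_lift.
Proof.
split.
  by rewrite -[1]divr1 -tofrac1 frac_lift_frac ?oner_eq0 // rmorph1 divr1.
move=> x y; have [n [d [d_neq0 ->]]] := tofrac_div_exists x.
have [n' [d' [d'_neq0 ->]]] := tofrac_div_exists y.
by rewrite mulf_div -!rmorphM !frac_lift_frac ?mulf_neq0 // mulf_div !rmorphM.
Qed.

End FractionLift.

Section EmbedPoly.
Variables (S : Type) (D : set (set S)) (hD : ultrafilter D) (F : S -> fieldType).
Local Notation embed := (@embed_poly S D hD F).

Lemma embed_polyE p : embed p = ulim hD (fun s => tofrac (ucomponents p s)).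
Proof. by []. Qed.

Lemma embed_polyD p q : embed (p + q) = embed p + embed q.
Proof.
rewrite !embed_polyE ulimD; apply: ulim_eq.
by apply: (D_mono1 hD (ucomponentsD p q)) => s /= ->; rewrite rmorphD.
Qed.

Lemma embed_poly_is_zmod_morphism : zmod_morphism embed.
Proof. by move=> p q; apply: (addIr (embed q)); rewrite -embed_polyD !subrK. Qed.

Lemma embed_poly_is_monoid_morphism : monoid_morphism embed.
Proof.
split=> [|p q]; last first.
  rewrite !embed_polyE ulimM; apply: ulim_eq.
  by apply: (D_mono1 hD (ucomponentsM p q)) => s /= ->; rewrite rmorphM.
rewrite embed_polyE -ulim1; apply: ulim_eq.
by apply: (D_mono1 hD (ucomponents1 hD F)) => s /= ->; rewrite rmorph1.
Qed.

End EmbedPoly.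

HB.instance Definition _ S D hD F := GRing.isZmodMorphism.Build _ _
  (@embed_poly S D hD F) (@embed_poly_is_zmod_morphism S D hD F).
HB.instance Definition _ S D hD F := GRing.isMonoidMorphism.Build _ _
  (@embed_poly S D hD F) (@embed_poly_is_monoid_morphism S D hD F).

Lemma embed_poly_inj S D (hD : ultrafilter D) (F : S -> fieldType) :
  injective (@embed_poly S D hD F).
Proof.
apply: raddf_inj => p /ulim_eqP p0.
apply: (is_ulim_poly_eq0 (is_ulim_poly_components p)).
by apply: (D_mono1 hD p0) => s /= /eqP; rewrite tofrac_eq0 => /eqP.
Qed.

HB.instance Definition _ S D hD F := GRing.isZmodMorphism.Build _ _
  (@embedF S D hD F) (frac_lift_is_zmod_morphism (@embed_poly_inj S D hD F)).
HB.instance Definition _ S D hD F := GRing.isMonoidMorphism.Build _ _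
  (@embedF S D hD F) (frac_lift_is_monoid_morphism (@embed_poly_inj S D hD F)).

Theorem mainTheorem4 (S : Type) (D : set (set S)) (hD : ultrafilter D)
    (S_infinite : infinite_set [set: S]) (D_nonprincipal : nonprincipal D)
    (F : S -> fieldType) (C : S -> closedFieldType)
    (iota : forall s, {rmorphism frakF F s -> C s})
    (C_alg : forall s (z : C s), algebraic_over (iota s) z)
    (alpha : UalgC hD C)
    (alpha_sep : separable_over (embedFU iota) alpha) :
  exists a : forall s, C s,
    alpha = ulimC hD a /\
    D [set s | separable_over (iota s) (a s)].
Proof.
case: alpha_sep => p [_ p_sep p_alpha].
pose q := map_poly (@embedF S D hD F) p.
have q_r := is_ulim_poly_components q.
have q_sep : separable_poly q by rewrite separable_map.
have qU_alpha : root (map_poly (umap iota) q) (ulim hD (repr alpha)).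
  by rewrite ulimK -map_poly_comp_id0 ?umap0.
have r_alpha := is_ulim_poly_root (is_ulim_poly_map iota q_r) qU_alpha.
exists (repr alpha); split; first by rewrite /ulimC ulimK.
apply: (D_mono2 hD (is_ulim_poly_separable q_r q_sep) r_alpha) => s /= r_sep r_root.
by exists (ucomponents q s); split; rewrite ?separable_poly_neq0.
Qed.
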